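(* For each $n\ge 2$ and $\ell\ge 2$ there exists a lattice tiling of $\mathbb{Z}^n$ with $\mathcal{S}_{L,K}$, where $L=(\ell,\ell,\dots,\ell)$ and $K=(\ell-1,\ell-1,\dots,\ell-1)$.
   Context: The discrete $n$-dimensional chair is $\mathcal{S}_{L,K}=\{(x_1,\dots,x_n)\in\mathbb{Z}^n: 0\le x_i<\ell_i \text{ for all } i, \text{ and there exists } j \text{ with } x_j<\ell_j-k_j\}$. A lattice is the set of integer combinations of $n$ linearly independent vectors of $\mathbb{Z}^n$; a lattice tiling of $\mathbb{Z}^n$ with a finite $\mathcal{S}\subset\mathbb{Z}^n$ is a lattice $\Lambda$ such that the translates $X+\mathcal{S}$, $X\in\Lambda$, are pairwise disjoint and cover $\mathbb{Z}^n$. *)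

From mathcomp Require Import all_boot all_order all_algebra.
Set Implicit Arguments. Unset Strict Implicit. Unset Printing Implicit Defensive.
Import Order.TTheory GRing.Theory Num.Theory.
Local Open Scope ring_scope.

Definition chair (n : nat) (L K : 'rV[int]_n) : pred 'rV[int]_n :=
  fun x => [forall i, (0 <= x 0 i) && (x 0 i < L 0 i)]
           && [exists j, x 0 j < L 0 j - K 0 j].

(* The rows of B are n linearly independent vectors of Z^n
   (independence over Z, equivalently over Q/R for integer vectors). *)
Definition lin_indep_rows (n : nat) (B : 'M[int]_n) : Prop :=
  forall c : 'rV[int]_n, c *m B = 0 -> c = 0.

Definition lattice_of (n : nat) (B : 'M[int]_n) : 'rV[int]_n -> Prop :=
  fun X => exists c : 'rV[int]_n, X = c *m B.

Definition lattice_tiling (n : nat) (B : 'M[int]_n) (S : pred 'rV[int]_n) : Prop :=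
  lin_indep_rows B /\
  (forall z : 'rV[int]_n, exists X, lattice_of B X /\ S (z - X)) /\
  (forall X Y z : 'rV[int]_n, lattice_of B X -> lattice_of B Y ->
      S (z - X) -> S (z - Y) -> X = Y).

From mathcomp Require Import all_boot all_order all_algebra.
From mathcomp Require Import zify ring.
Import Order.TTheory GRing.Theory Num.Theory.
Local Open Scope ring_scope.

(* The lattice is spanned by the ladder vectors [l e_i - (l - 1) e_(i+1)]
   (i < n - 1) and the all-ones vector. It is the set of integer vectors whose
   weight [\sum_j x_j l^j (l - 1)^(n - 1 - j)] is divisible by
   [m = l^n - (l - 1)^n], which is also the number of points of the chair.
   A nonzero combination of ladder vectors has two coordinates differing by at
   least [2 l - 1] (look at both ends of the plateau where its coefficient
   sequence is maximal), whereas two chair points differ by at most [l - 1] in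
   every coordinate; this gives disjointness of the translates. So the chair
   meets each of the [m] weight classes at most once, hence exactly once, which
   gives the covering. *)

Section LadderForm.
Variable l : int.

Definition ladder_comb (a : nat -> int) (j : nat) : int := l * a j.+1 - (l - 1) * a j.

(* [weight x N = \sum_(j < N) x j * l ^ j * (l - 1) ^ (N - 1 - j)]. *)
Fixpoint weight (x : nat -> int) (j : nat) : int :=
  if j is j'.+1 then (l - 1) * weight x j' + x j' * l ^+ j' else 0.

Lemma weightB (x y : nat -> int) j : weight (fun k => x k - y k) j = weight x j - weight y j.
Proof. by elim: j => [|j IH] /=; [rewrite subr0 | rewrite IH; ring]. Qed.

Lemma weight_cst c j : weight (fun _ => c) j = c * (l ^+ j - (l - 1) ^+ j).
Proof.
elim: j => [|j IH] /=; first by rewrite !expr0 subrr mulr0.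
by rewrite IH !exprS; ring.
Qed.

Lemma eq_weight (x y : nat -> int) j : x =1 y -> weight x j = weight y j.
Proof. by move=> xy; elim: j => [|j IH] //=; rewrite IH xy. Qed.

Lemma weight_addn x j k :
  exists u, weight x (j + k) = (l - 1) ^+ k * weight x j + l ^+ j * u.
Proof.
elim: k => [|k [u IH]]; first by exists 0; rewrite addn0 mulr0 addr0 expr0 mul1r.
exists ((l - 1) * u + x (j + k)%N * l ^+ k).
by rewrite addnS /= IH exprS exprD; ring.
Qed.

Lemma coprimez_pred : coprimez l (l - 1).
Proof. by apply/coprimezP; exists (1, -1) => /=; ring. Qed.

(* Since [l] and [l - 1] are coprime, [weight x N = 0] forces [l ^ j] to divide
   every prefix [weight x j]; the quotients are the ladder coefficients. *)
Lemma weight_eq0_ladder x N : l != 0 -> weight x N = 0 ->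
  exists a, [/\ a 0%N = 0, a N = 0 & forall j, (j < N)%N -> x j = ladder_comb a j].
Proof.
move=> l_neq0 wN.
have dvd_prefix j : (j <= N)%N -> (l ^+ j %| weight x j)%Z.
  move=> le_jN; have [u] := weight_addn x j (N - j).
  rewrite subnKC // wN => /eqP; rewrite eq_sym addr_eq0 => /eqP E.
  rewrite -(@Gauss_dvdzr _ ((l - 1) ^+ (N - j))).
    by rewrite E rpredN dvdz_mulr.
  by apply/coprimezXl/coprimezXr/coprimez_pred.
have lX_neq0 j : l ^+ j != 0 by rewrite expf_neq0.
exists (fun j => (weight x j %/ l ^+ j)%Z); split=> [//||j lt_jN].
  by rewrite wN div0z.
apply: (mulfI (lX_neq0 j)).
rewrite /ladder_comb mulrBr mulrA -exprSr [X in _ = X - _]mulrC divzK; last exact: dvd_prefix.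
rewrite mulrCA [X in _ = _ - _ * X]mulrC divzK; last by apply: dvd_prefix; lia.
by rewrite /=; ring.
Qed.

Lemma exists_argmax (a : nat -> int) N :
  exists2 j0, (j0 <= N)%N & forall i, (i <= N)%N -> a i <= a j0.
Proof.
elim: N => [|N [j0 le_j0N max_j0]].
  by exists 0%N => // i; rewrite leqn0 => /eqP ->.
have [le_aN|lt_aN] := lerP (a N.+1) (a j0).
  exists j0 => [|i]; first by lia.
  by rewrite leq_eqVlt ltnS => /orP [/eqP -> //|]; apply: max_j0.
exists N.+1 => // i; rewrite leq_eqVlt ltnS => /orP [/eqP -> //|le_iN].
exact: le_trans (max_j0 _ le_iN) (ltW lt_aN).
Qed.

Hypothesis l_gt0 : 0 < l.

(* Around the first and the last index where [a] reaches its positive maximum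
   [M], [ladder_comb a] is at least [M + l - 1], resp. at most [M - l]. *)
Lemma ladder_comb_spread_pos (a : nat -> int) N : a 0%N = 0 -> a N = 0 ->
  (exists2 j, (j <= N)%N & 0 < a j) ->
  exists p q, [/\ (p < N)%N, (q < N)%N & 2 * l - 1 <= ladder_comb a p - ladder_comb a q].
Proof.
move=> a0 aN [j le_jN aj_gt0].
have [j0 le_j0N max_j0] := exists_argmax a N.
set M := a j0.
have M_gt0 : 0 < M by apply: lt_le_trans aj_gt0 (max_j0 _ le_jN).
have aM_first : exists k, a k == M by exists j0.
have aM_last : exists k, (k <= N)%N && (a k == M) by exists j0; rewrite le_j0N eqxx.
have [p /eqP ap min_p] := ex_minnP aM_first.
have le_N k : (k <= N)%N && (a k == M) -> (k <= N)%N by case/andP.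
have [q /andP [le_qN /eqP aq] max_q] := ex_maxnP aM_last le_N.
have le_pj0 : (p <= j0)%N by apply: min_p.
have below_M k : (k <= N)%N -> a k != M -> a k <= M - 1.
  by move=> le_kN; have := max_j0 _ le_kN; lia.
have p_gt0 : (0 < p)%N by case: p ap {min_p le_pj0} => //; rewrite a0 => M0; lia.
have lt_qN : (q < N)%N.
  by rewrite ltn_neqAle le_qN andbT; apply/eqP => qN; move: aq; rewrite qN aN; lia.
have ap' : a p.-1 <= M - 1.
  apply: below_M; first by lia.
  by apply/negP => /min_p; lia.
have aq' : a q.+1 <= M - 1.
  by apply: below_M => //; apply/negP => aq1; have := max_q q.+1; rewrite lt_qN aq1; lia.
exists p.-1, q; split; [lia | done |].
by rewrite /ladder_comb prednK // ap aq; nia.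
Qed.

Lemma ladder_comb_spread (a : nat -> int) N : a 0%N = 0 -> a N = 0 ->
  (exists2 j, (j <= N)%N & a j != 0) ->
  exists p q, [/\ (p < N)%N, (q < N)%N & 2 * l - 1 <= ladder_comb a p - ladder_comb a q].
Proof.
move=> a0 aN [j le_jN aj_neq0].
have [aj_gt0|aj_le0] := ltrP 0 (a j).
  by apply: ladder_comb_spread_pos => //; exists j.
have [|||p [q [lt_pN lt_qN spread]]] := ladder_comb_spread_pos (fun k => - a k) N.
- by rewrite a0 oppr0.
- by rewrite aN oppr0.
- by exists j; rewrite // oppr_gt0 lt_neqAle aj_neq0.
by exists q, p; split=> //; move: spread; rewrite /ladder_comb; lia.
Qed.

End LadderForm.

Lemma sum_ord_eq_if (V : nmodType) (g : nat -> V) m k :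
  \sum_(i < m) (if (i : nat) == k then g i else 0) = if (k < m)%N then g k else 0.
Proof.
rewrite -big_mkcond /=; case: ltnP => [lt_km|le_mk].
  by rewrite (big_pred1 (Ordinal lt_km)) // => i; rewrite -val_eqE.
by rewrite big_pred0 // => i; apply/negbTE; apply: contraTneq (ltn_ord i) => ->; rewrite -leqNgt.
Qed.

Section ChairTiling.
Variables n l : nat.
Hypothesis l_gt0 : (0 < l)%N.

Local Notation chair_l := (chair (const_mx l%:Z) (const_mx (l%:Z - 1))).

Definition chair_basis : 'M[int]_n.+1 := \matrix_(i, j)
  if (i < n)%N then
    (if (j : nat) == i then l%:Z else if (j : nat) == i.+1 then 1 - l%:Z else 0)
  else 1.

(* The coefficient of row [i < n] is entry [i + 1]; entries [0] and [n + 1]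
   are padding zeros. *)
Definition ladder_coefs (c : 'rV[int]_n.+1) (k : nat) : int :=
  if (0 < k <= n)%N then c 0 (inord k.-1) else 0.

Lemma ladder_coefs0 c : ladder_coefs c 0 = 0. Proof. by []. Qed.

Lemma ladder_coefsN c : ladder_coefs c n.+1 = 0.
Proof. by rewrite /ladder_coefs ltnn andbF. Qed.

Lemma ladder_coefsS c (j : 'I_n.+1) : (j < n)%N -> ladder_coefs c j.+1 = c 0 j.
Proof. by move=> lt_jn; rewrite /ladder_coefs lt_jn /= inord_val. Qed.

Lemma mul_chair_basis c (j : 'I_n.+1) :
  (c *m chair_basis) 0 j = c 0 ord_max + ladder_comb l%:Z (ladder_coefs c) j.
Proof.
rewrite mxE big_ord_recr /= mxE ltnn mulr1 addrC; congr (_ + _).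
transitivity (\sum_(i < n) (l%:Z * (if (i : nat) == j then ladder_coefs c i.+1 else 0)
   - (l%:Z - 1) * (if (i : nat) == j.-1 then
                     (if (0 < j)%N then ladder_coefs c i.+1 else 0) else 0))).
  apply: eq_bigr => i _.
  have -> : c 0 (widen_ord (leqnSn n) i) = ladder_coefs c i.+1.
    exact: esym (ladder_coefsS c (widen_ord (leqnSn n) i) (ltn_ord i)).
  rewrite mxE /= ltn_ord.
  move: (ladder_coefs c i.+1) (nat_of_ord i) (nat_of_ord j) => v a b.
  do 5?(case: ifP => ?); (try by ring); lia.
rewrite sumrB -!mulr_sumr (sum_ord_eq_if _ (fun k => ladder_coefs c k.+1)).
rewrite (sum_ord_eq_if _ (fun k => if (0 < j)%N then ladder_coefs c k.+1 else 0)).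
rewrite /ladder_comb; congr (_ * _ - _ * _).
  by case: ifP => // ge_jn; rewrite /ladder_coefs; case: ifP => //; lia.
case: (posnP j) => [->|j_gt0] /=; first by rewrite if_same.
by rewrite prednK //; case: ifP => //; have := ltn_ord j; lia.
Qed.

Lemma chair_basis_comb_const (c : 'rV[int]_n.+1) :
  (forall p q, (c *m chair_basis) 0 p - (c *m chair_basis) 0 q <= 2 * l%:Z - 2) ->
  (forall j : 'I_n.+1, (j < n)%N -> c 0 j = 0) /\
  (forall j, (c *m chair_basis) 0 j = c 0 ord_max).
Proof.
move=> small_spread.
have coefs0 k : (k <= n.+1)%N -> ladder_coefs c k = 0.
  move=> le_kn; apply/eqP/negPn/negP => coef_neq0.
  have [||p [q [lt_pn lt_qn]]] :=
    @ladder_comb_spread l%:Z _ _ _ (ladder_coefs0 c) (ladder_coefsN c).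
  - by rewrite ltz_nat.
  - by exists k.
  have := small_spread (inord p) (inord q); rewrite !mul_chair_basis !inordK //; lia.
split=> j; first by move=> lt_jn; rewrite -ladder_coefsS // coefs0.
rewrite mul_chair_basis /ladder_comb !coefs0 ?mulr0 ?subr0 ?addr0 //; have := ltn_ord j; lia.
Qed.

Lemma chair_basis_indep : lin_indep_rows chair_basis.
Proof.
move=> c cB0.
have [p q|c_init cB_const] := chair_basis_comb_const c.
  by rewrite cB0 !mxE subrr; lia.
apply/rowP => j; rewrite mxE.
have [lt_jn|le_nj] := ltnP j n; first exact: c_init.
have -> : j = ord_max by apply: val_inj => /=; have := ltn_ord j; lia.
by rewrite -(cB_const ord_max) cB0 mxE.
Qed.

Lemma chair_lP (s : 'rV[int]_n.+1) : chair_l s ->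
  (forall j, 0 <= s 0 j <= l%:Z - 1) /\ exists j, s 0 j = 0.
Proof.
case/andP => /forallP s_box /existsP [j0 s_j0]; split=> [j|].
  by move: (s_box j); rewrite !mxE; lia.
by exists j0; move: s_j0 (s_box j0); rewrite !mxE; lia.
Qed.

Lemma chair_l_diff_spread (s t : 'rV[int]_n.+1) p q : chair_l s -> chair_l t ->
  (s - t) 0 p - (s - t) 0 q <= 2 * l%:Z - 2.
Proof.
move=> /chair_lP [box_s _] /chair_lP [box_t _]; rewrite !mxE.
move: (box_s p) (box_s q) (box_t p) (box_t q).
by move: (s 0 p) (s 0 q) (t 0 p) (t 0 q); lia.
Qed.

Lemma chair_l_diff_const (s t : 'rV[int]_n.+1) k : chair_l s -> chair_l t ->
  (forall j, (s - t) 0 j = k) -> k = 0.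
Proof.
move=> /chair_lP [box_s [js zero_s]] /chair_lP [box_t [jt zero_t]] st_const.
move: (st_const js) (st_const jt) (box_s jt) (box_t js); rewrite !mxE zero_s zero_t.
by move: (s 0 jt) (t 0 js); lia.
Qed.

Lemma chair_basis_disjoint (X Y z : 'rV[int]_n.+1) :
  lattice_of chair_basis X -> lattice_of chair_basis Y ->
  chair_l (z - X) -> chair_l (z - Y) -> X = Y.
Proof.
move=> [cx ->] [cy ->] chair_x chair_y.
have cB_diff : (cy - cx) *m chair_basis
    = (z - cx *m chair_basis) - (z - cy *m chair_basis).
  by rewrite mulmxBl; apply/rowP => j; rewrite !mxE; ring.
have [p q|_ cB_const] := chair_basis_comb_const (cy - cx).
  by rewrite cB_diff; apply: chair_l_diff_spread.
have cx_last : (cy - cx) 0 ord_max = 0.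
  by apply: chair_l_diff_const chair_x chair_y _ => j; rewrite -cB_diff cB_const.
apply/eqP; rewrite eq_sym -subr_eq0 -mulmxBl; apply/eqP/rowP => j.
by rewrite cB_const cx_last mxE.
Qed.

Definition row_weight (x : 'rV[int]_n.+1) : int := weight l%:Z (fun k => x 0 (inord k)) n.+1.

Definition chair_size : nat := (l ^ n.+1 - (l - 1) ^ n.+1)%N.

Lemma row_weightB x y : row_weight (x - y) = row_weight x - row_weight y.
Proof. by rewrite /row_weight -weightB; apply: eq_weight => k; rewrite !mxE. Qed.

Lemma chair_size_gt0 : (0 < chair_size)%N.
Proof. by rewrite subn_gt0 ltn_exp2r //; lia. Qed.

Lemma chair_sizeE : chair_size%:Z = l%:Z ^+ n.+1 - (l%:Z - 1) ^+ n.+1.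
Proof.
rewrite /chair_size -subzn; last by rewrite leq_exp2r ?leq_subr.
by rewrite (subzn l_gt0) -!natz -!natrX.
Qed.

Lemma row_weight_lattice x k : row_weight x = k * chair_size%:Z -> lattice_of chair_basis x.
Proof.
move=> wx.
have w0 : weight l%:Z (fun j => x 0 (inord j) - k) n.+1 = 0.
  by rewrite weightB weight_cst -chair_sizeE -/(row_weight x) wx subrr.
have [|a [a0 an x_comb]] := @weight_eq0_ladder _ _ _ _ w0; first by rewrite eqz_nat -lt0n.
pose c : 'rV[int]_n.+1 := \row_(j < n.+1) (if (j < n)%N then a j.+1 else k).
have coefs_c i : (i <= n.+1)%N -> ladder_coefs c i = a i.
  move=> le_in; rewrite /ladder_coefs; case: (posnP i) => [-> //|i_gt0].
  have [le_in'|lt_ni] /= := leqP i n; last by have -> : i = n.+1 by lia.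
  rewrite mxE inordK; last by lia.
  by rewrite ifT ?prednK //; lia.
exists c; apply/rowP => j; rewrite mul_chair_basis mxE ltnn.
rewrite /ladder_comb !coefs_c; try by have := ltn_ord j; lia.
by rewrite -/(ladder_comb l%:Z a j) -x_comb // inord_val; ring.
Qed.

Lemma weight_mod_lt x : (`|(row_weight x %% chair_size%:Z)%Z|%N < chair_size)%N.
Proof.
have m_gt0 : 0 < chair_size%:Z by rewrite ltz_nat chair_size_gt0.
have := modz_ge0 (row_weight x) (lt0r_neq0 m_gt0).
have := ltz_pmod (row_weight x) m_gt0.
by move: (_ %% _)%Z => r; lia.
Qed.

Definition weight_class (x : 'rV[int]_n.+1) : 'I_chair_size := Ordinal (weight_mod_lt x).

Lemma weight_class_inj x y : weight_class x = weight_class y -> lattice_of chair_basis (x - y).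
Proof.
move=> /(congr1 (fun o : 'I_chair_size => (o : nat)%:Z)) /=.
have m_neq0 : chair_size%:Z != 0 by rewrite eqz_nat -lt0n chair_size_gt0.
rewrite !gez0_abs ?modz_ge0 // => xy_mod.
apply: (@row_weight_lattice _
  ((row_weight x %/ chair_size%:Z)%Z - (row_weight y %/ chair_size%:Z)%Z)).
rewrite row_weightB {1}(divz_eq (row_weight x) chair_size).
by rewrite {1}(divz_eq (row_weight y) chair_size) xy_mod; ring.
Qed.

Definition chair_point (f : {ffun 'I_n.+1 -> 'I_l}) : 'rV[int]_n.+1 := \row_j (f j : nat)%:Z.

Definition chair_points : {set {ffun 'I_n.+1 -> 'I_l}} :=
  [set f : {ffun 'I_n.+1 -> 'I_l} | [exists j, (f j : nat) == 0%N]].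

Lemma chair_pointP f : f \in chair_points -> chair_l (chair_point f).
Proof.
rewrite inE => /existsP [j0 /eqP f_j0]; apply/andP; split.
  by apply/forallP => j; rewrite !mxE ltz_nat ltn_ord.
by apply/existsP; exists j0; rewrite !mxE f_j0; lia.
Qed.

(* The complement of [chair_points] is the set of functions into [{1, ..., l - 1}]. *)
Lemma card_chair_points : #|chair_points| = chair_size.
Proof.
pose nonzero := [pred i : 'I_l | (i : nat) != 0%N].
have card_nonzero : #|nonzero| = (l - 1)%N.
  have := cardC nonzero; rewrite card_ord.
  suff -> : #|[predC nonzero]| = 1%N by move: #|nonzero|; lia.
  rewrite -(card1 (Ordinal l_gt0)); apply: eq_card => i; rewrite !inE negbK.
  by apply/eqP/eqP => [i0|->]; first exact: val_inj.
have card_compl : #|~: chair_points| = ((l - 1) ^ n.+1)%N.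
  transitivity #|ffun_on_mem 'I_n.+1 (mem nonzero)|.
    apply: eq_card => f.
    by rewrite !inE negb_exists; apply/forallP/ffun_onP => f_nz j; have := f_nz j; rewrite !inE.
  by rewrite card_ffun_on card_ord card_nonzero.
have := cardsC chair_points; rewrite card_ffun !card_ord card_compl /chair_size; lia.
Qed.

(* By disjointness [weight_class] is injective on the [chair_size] chair points. *)
Lemma weight_class_onto r : exists2 f, f \in chair_points & weight_class (chair_point f) = r.
Proof.
have inj : {in chair_points &, injective (fun f => weight_class (chair_point f))}.
  move=> f g f_chair g_chair /weight_class_inj fg_lattice.
  have zero_lattice : lattice_of chair_basis 0 by exists 0; rewrite mul0mx.
  have := @chair_basis_disjoint _ _ (chair_point f) zero_lattice fg_lattice.
  rewrite subr0 subKr => /(_ (chair_pointP _ f_chair) (chair_pointP _ g_chair)).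
  move=> /eqP; rewrite eq_sym subr_eq0 => /eqP fg.
  apply/ffunP => j; apply: val_inj.
  by have := congr1 (fun v : 'rV[int]_n.+1 => v 0 j) fg; rewrite !mxE; case.
have onto : (fun f => weight_class (chair_point f)) @: chair_points = setT.
  apply/eqP; rewrite eqEcard subsetT cardsT card_ord card_in_imset //.
  by rewrite card_chair_points leqnn.
have : r \in (fun f => weight_class (chair_point f)) @: chair_points by rewrite onto inE.
by case/imsetP => f f_chair ->; exists f.
Qed.

Lemma chair_basis_cover z : exists X, lattice_of chair_basis X /\ chair_l (z - X).
Proof.
have [f f_chair class_f] := weight_class_onto (weight_class z).
exists (z - chair_point f); split; first exact: weight_class_inj.
by rewrite subKr; apply: chair_pointP.
Qed.

End ChairTiling.

Theorem mainTheorem8 (n l : nat) : (2 <= n)%N -> (2 <= l)%N ->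
  exists B : 'M[int]_n,
    lattice_tiling B (chair (const_mx (l%:Z)) (const_mx (l%:Z - 1))).
Proof.
case: n => [//|n] _ le2l; have l_gt0 : (0 < l)%N by apply: leq_trans le2l.
exists (chair_basis n l); split; first exact: chair_basis_indep.
split; first exact: chair_basis_cover.
by move=> X Y z; apply: chair_basis_disjoint.
Qed.
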